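(* Let $(\bar{A}_{\tau,\sigma},\bar{B}_\tau,B_\tau,C_\tau)$ be csRKN coefficients satisfying, for all $\tau,\sigma\in[0,1]$, $$C_\tau=1-C_{1-\tau},\ \ \bar{A}_{\tau,\sigma}=B_{1-\sigma}(1-C_{1-\tau})-\bar{B}_{1-\sigma}+\bar{A}_{1-\tau,1-\sigma},\ \ \bar{B}_\tau=B_{1-\tau}-\bar{B}_{1-\tau},\ \ B_\tau=B_{1-\tau}.$$ Let $(b_i,c_i)_{i=1}^s$ be a quadrature formula on $[0,1]$ (weights $b_i$, nodes $c_i$) with $b_{s+1-i}=b_i$ and $c_{s+1-i}=1-c_i$ for all $i$. Then the $s$-stage RKN method with coefficients $$\bar{a}_{ij}=b_j\bar{A}_{c_i,c_j},\quad \bar{b}_i=b_i\bar{B}_{c_i},\quad \hat b_i=b_iB_{c_i},\quad \hat c_i=C_{c_i}\qquad(i,j=1,\dots,s)$$ is symmetric.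
   Context: For $q''=f(t,q)$ with smooth $f:\mathbb{R}\times\mathbb{R}^d\to\mathbb{R}^d$, an $s$-stage RKN method with coefficients $(\bar a_{ij},\bar b_i,\hat b_i,\hat c_i)$ and step size $h$ is $$Q_i=q_0+h\hat c_iq'_0+h^2\sum_{j=1}^s\bar a_{ij}f(t_0+\hat c_jh,Q_j),\ i=1,\dots,s,$$ $$q_1=q_0+hq'_0+h^2\sum_{i=1}^s\bar b_if(t_0+\hat c_ih,Q_i),\qquad q'_1=q'_0+h\sum_{i=1}^s\hat b_if(t_0+\hat c_ih,Q_i).$$ A one-step method $\Phi_h$ is symmetric if $\Phi_h=\Phi_{-h}^{-1}$, i.e. exchanging $h\leftrightarrow-h$, $(q_0,q_0')\leftrightarrow(q_1,q_1')$, $t_0\leftrightarrow t_1=t_0+h$ leaves the method unaltered. *)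

From HB Require Import structures.
From mathcomp Require Import all_boot all_order all_algebra.
Set Implicit Arguments. Unset Strict Implicit. Unset Printing Implicit Defensive.
Import Order.TTheory GRing.Theory Num.Theory.
Local Open Scope ring_scope.

(* One step of the s-stage RKN method with coefficients (abar, bbar, bhat, chat)
   for q'' = f(t,q), q in R^d (row vectors), from (t0,q0,p0) with step h,
   producing (q1,p1); p denotes q'.  The (possibly implicit) method is viewed
   as a relation: the step holds iff there exist stage values Q_i satisfying
   the stage equations. *)
Definition rkn_step (R : nzRingType) (d s : nat)
  (abar : 'I_s -> 'I_s -> R) (bbar bhat chat : 'I_s -> R)
  (f : R -> 'rV[R]_d -> 'rV[R]_d) (t0 h : R) (q0 p0 q1 p1 : 'rV[R]_d) : Prop :=
  exists Q : 'I_s -> 'rV[R]_d,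
    (forall i : 'I_s,
        Q i = q0 + (h * chat i) *: p0
              + (h ^+ 2) *: \sum_(j < s) (abar i j *: f (t0 + chat j * h) (Q j)))
    /\ q1 = q0 + h *: p0 + (h ^+ 2) *: \sum_(i < s) (bbar i *: f (t0 + chat i * h) (Q i))
    /\ p1 = p0 + h *: \sum_(i < s) (bhat i *: f (t0 + chat i * h) (Q i)).

(* Symmetry: Phi_h = Phi_{-h}^{-1}, i.e. exchanging h <-> -h,
   (q0,p0) <-> (q1,p1), t0 <-> t1 = t0 + h leaves the method unaltered. *)
Definition rkn_symmetric (R : nzRingType) (d s : nat)
  (abar : 'I_s -> 'I_s -> R) (bbar bhat chat : 'I_s -> R) : Prop :=
  forall (f : R -> 'rV[R]_d -> 'rV[R]_d) (t0 h : R) (q0 p0 q1 p1 : 'rV[R]_d),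
    rkn_step abar bbar bhat chat f t0 h q0 p0 q1 p1 <->
    rkn_step abar bbar bhat chat f (t0 + h) (- h) q1 p1 q0 p0.

From HB Require Import structures.
From mathcomp Require Import all_boot all_order all_algebra ring.
Set Implicit Arguments. Unset Strict Implicit. Unset Printing Implicit Defensive.
Import Order.TTheory GRing.Theory Num.Theory.
Local Open Scope ring_scope.

(* Write i* := rev_ord i for the reflected stage index s+1-i.  Call RKN
   coefficients (a, bb, bh, ch) reflection-symmetric when
     ch_{i*} = 1 - ch_i,   bh_{i*} = bh_i,   bb_{i*} = bh_i - bb_i,
     a_{i*,j*} = bh_j (1 - ch_i) - bb_j + a_{ij}.
   For such coefficients, reversing the stage vector (Q_i -> Q_{i*}) turns a
   solution of the step equations from (t0, q0, p0) with step h into a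
   solution from (t0 + h, q1, p1) with step -h (rkn_step_reverse).  As
   (t0, h) -> (t0 + h, -h) is an involution, this single implication already
   gives the symmetry Phi_h = Phi_{-h}^{-1} (rkn_symmetric_of_reflection).
   The csRKN symmetry conditions, sampled at the nodes of a symmetric
   quadrature formula, give exactly reflection-symmetric coefficients
   (csrkn_reflection_symmetric), and theorem4p1 follows. *)

Definition reflection_symmetric (R : nzRingType) (s : nat)
  (a : 'I_s -> 'I_s -> R) (bb bh ch : 'I_s -> R) : Prop :=
  [/\ forall i, ch (rev_ord i) = 1 - ch i,
      forall i, bh (rev_ord i) = bh i,
      forall i, bb (rev_ord i) = bh i - bb i
    & forall i j, a (rev_ord i) (rev_ord j) = bh j * (1 - ch i) - bb j + a i j].

Lemma sum_rev_ord (V : nmodType) (n : nat) (g : 'I_n -> V) :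
  \sum_(j < n) g (rev_ord j) = \sum_(j < n) g j.
Proof. by rewrite [RHS](reindex_inj rev_ord_inj). Qed.

Section Reflection.

Variables (R : comNzRingType) (s : nat).
Variables (a : 'I_s -> 'I_s -> R) (bb bh ch : 'I_s -> R).
Hypothesis refl : reflection_symmetric a bb bh ch.

(* The condition on a, read with only the column index reflected; this is the
   form in which it enters the reversed stage equations. *)
Lemma refl_a_col i j : a i (rev_ord j) = ch i * bh j - bb j + a (rev_ord i) j.
Proof.
case: refl => hch _ _ ha.
by rewrite -{1}(rev_ordK i) ha hch; ring.
Qed.

Lemma rkn_step_reverse (d : nat) (f : R -> 'rV[R]_d -> 'rV[R]_d) (t0 h : R)
    (q0 p0 q1 p1 : 'rV[R]_d) :
  rkn_step a bb bh ch f t0 h q0 p0 q1 p1 ->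
  rkn_step a bb bh ch f (t0 + h) (- h) q1 p1 q0 p0.
Proof.
case: refl => hch hbh hbb _ [Q [hQ [hq1 hp1]]].
pose F k := f (t0 + ch k * h) (Q k).
(* Reversed stages are evaluated at the original times; reindexing the sums. *)
have sum_reverse (g : 'I_s -> R) :
    \sum_j g j *: f (t0 + h + ch j * - h) (Q (rev_ord j))
    = \sum_j g (rev_ord j) *: F j.
  rewrite -sum_rev_ord; apply: eq_bigr => j _.
  by rewrite rev_ordK /F hch; congr (_ *: f _ _); ring.
pose X := \sum_i bb i *: F i.
pose Y := \sum_i bh i *: F i.
have {}hq1 : q1 = q0 + h *: p0 + h ^+ 2 *: X by [].
have {}hp1 : p1 = p0 + h *: Y by [].
exists (fun i => Q (rev_ord i)); split; [move=> i /= | split];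
  rewrite sum_reverse.
-
  have -> : \sum_j a i (rev_ord j) *: F j
            = ch i *: Y - X + \sum_j a (rev_ord i) j *: F j.
    rewrite scaler_sumr -sumrB -big_split /=; apply: eq_bigr => j _.
    by rewrite refl_a_col scalerDl scalerBl scalerA.
  rewrite hQ hq1 hp1 hch.
  by apply/rowP => m; rewrite !mxE; ring.
-
  under eq_bigr => j _ do rewrite hbb scalerBl.
  rewrite sumrB -/X -/Y hq1 hp1.
  by apply/rowP => m; rewrite !mxE; ring.
-
  under eq_bigr => j _ do rewrite hbh.
  rewrite -/Y hp1.
  by apply/rowP => m; rewrite !mxE; ring.
Qed.

Lemma rkn_symmetric_of_reflection (d : nat) : rkn_symmetric d a bb bh ch.
Proof.
move=> f t0 h q0 p0 q1 p1; split; first exact: rkn_step_reverse.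
by move/rkn_step_reverse; rewrite opprK addrK.
Qed.

End Reflection.

Lemma csrkn_reflection_symmetric (R : realFieldType) (s : nat)
  (Abar : R -> R -> R) (Bbar B C : R -> R)
  (hC : forall tau, 0 <= tau <= 1 -> C tau = 1 - C (1 - tau))
  (hA : forall tau sigma, 0 <= tau <= 1 -> 0 <= sigma <= 1 ->
          Abar tau sigma = B (1 - sigma) * (1 - C (1 - tau)) - Bbar (1 - sigma)
                           + Abar (1 - tau) (1 - sigma))
  (hBbar : forall tau, 0 <= tau <= 1 -> Bbar tau = B (1 - tau) - Bbar (1 - tau))
  (hB : forall tau, 0 <= tau <= 1 -> B tau = B (1 - tau))
  (b c : 'I_s -> R)
  (hc01 : forall i, 0 <= c i <= 1)
  (hbsym : forall i, b (rev_ord i) = b i)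
  (hcsym : forall i, c (rev_ord i) = 1 - c i) :
  reflection_symmetric
    (fun i j => b j * Abar (c i) (c j))
    (fun i => b i * Bbar (c i))
    (fun i => b i * B (c i))
    (fun i => C (c i)).
Proof.
have c1K i : 1 - (1 - c i) = c i by ring.
have hrc01 i : 0 <= 1 - c i <= 1 by rewrite -hcsym.
split=> [i | i | i | i j] /=; rewrite ?hbsym !hcsym.
- by rewrite (hC (c i)) //; ring.
- by rewrite -hB.
- by rewrite (hBbar (1 - c i)) // c1K mulrBr.
- by rewrite (hA (1 - c i) (1 - c j)) // !c1K; ring.
Qed.

Theorem theorem4p1 (R : realFieldType) (d s : nat)
  (Abar : R -> R -> R) (Bbar B C : R -> R)
  (hC : forall tau, 0 <= tau <= 1 -> C tau = 1 - C (1 - tau))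
  (hA : forall tau sigma, 0 <= tau <= 1 -> 0 <= sigma <= 1 ->
          Abar tau sigma = B (1 - sigma) * (1 - C (1 - tau)) - Bbar (1 - sigma)
                           + Abar (1 - tau) (1 - sigma))
  (hBbar : forall tau, 0 <= tau <= 1 -> Bbar tau = B (1 - tau) - Bbar (1 - tau))
  (hB : forall tau, 0 <= tau <= 1 -> B tau = B (1 - tau))
  (b c : 'I_s -> R)
  (hc01 : forall i, 0 <= c i <= 1)
  (hbsym : forall i, b (rev_ord i) = b i)
  (hcsym : forall i, c (rev_ord i) = 1 - c i) :
  rkn_symmetric d
    (fun i j => b j * Abar (c i) (c j))
    (fun i => b i * Bbar (c i))
    (fun i => b i * B (c i))
    (fun i => C (c i)).
Proof.
apply: rkn_symmetric_of_reflection.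
exact: (csrkn_reflection_symmetric hC hA hBbar hB hc01 hbsym hcsym).
Qed.
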